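(* Let $n\ge2$. Every finite rooted poset $F$ of height $n$ which validates $\mathbf{PL}$ is the image of a sawed tree of height $n$ under a surjective p-morphism.
   Context: A p-morphism $f\colon G\to F$ is a map with $f(\uparrow x)=\uparrow f(x)$ for all $x$. A finite tree is a finite rooted poset in which each $\downarrow x$ is a chain; $\mathrm{Top}(T)$ is its set of maximal elements. Let $T$ be a finite tree of height $>0$ all of whose top elements have the same height, with a plane ordering $\prec$ of $\mathrm{Top}(T)$ (a linear order such that each $\uparrow x\cap\mathrm{Top}(T)$ is a $\prec$-interval); enumerate $\mathrm{Top}(T)=\{t_1\prec\cdots\prec t_k\}$. The sawed tree based on $(T,\prec)$ is $T$ together with new elements $s_1,\dots,s_{k-1}$ with $t_i<s_i$ and $t_{i+1}<s_i$ (closed under transitivity). The height of a poset is the maximum of $|C|-1$ over chains $C$. For a finite rooted poset $Q$, $\chi(Q)$ is its Jankov–Fine formula: a frame validates $\chi(Q)$ iff it has no surjective p-morphism from an upset of it onto $Q$. The 3-fork is $\{r,a,b,c\}$ with $r<a,r<b,r<c$ only; the Scott frame is $\{r,u_1,u_2,v\}$ with $r<u_1<u_2$, $r<v$ (and $r<u_2$) only. $\mathbf{PL}$ is the smallest intermediate logic containing $\chi(\text{3-fork})$ and $\chi(\text{Scott frame})$. *)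

From mathcomp Require Import all_boot.
Set Implicit Arguments. Unset Strict Implicit. Unset Printing Implicit Defensive.

Section Posets.
Variable T : finType.
Variable le : rel T.

Definition is_porder : Prop :=
  reflexive le /\ antisymmetric le /\ transitive le.

Definition is_root (r : T) : Prop := forall x, le r x.

Definition finite_rooted_poset (r : T) : Prop := is_porder /\ is_root r.

Definition is_chain (C : {set T}) : Prop :=
  {in C &, forall x y, le x y || le y x}.

Definition has_height (n : nat) : Prop :=
  (exists C : {set T}, is_chain C /\ #|C| = n.+1) /\
  (forall C : {set T}, is_chain C -> #|C| <= n.+1).

Definition up (x : T) : {set T} := [set y | le x y].
Definition down (x : T) : {set T} := [set y | le y x].

Definition is_upset (U : {set T}) : Prop :=
  forall x y, x \in U -> le x y -> y \in U.

Definition is_top (x : T) : bool := [forall y, le x y ==> (y == x)].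

Definition is_tree (r : T) : Prop :=
  finite_rooted_poset r /\ forall x, is_chain (down x).

Definition elt_height (x : T) : nat := #|down x|.-1.

End Posets.

(* p-morphism f : G -> F (restricted to the upset U of G): f(up x) = up (f x),
   where up x is computed in U (for an upset U this is U :&: up x). *)
Definition pmorphism_on (G F : finType) (leG : rel G) (leF : rel F)
    (U : {set G}) (f : G -> F) : Prop :=
  forall x, x \in U -> f @: (U :&: up leG x) = up leF (f x).

Definition pmorphism (G F : finType) (leG : rel G) (leF : rel F) (f : G -> F) :=
  pmorphism_on leG leF [set: G] f.

(* F validates chi(Q), via the characterization of the Jankov-Fine formula:
   no upset of F maps onto Q by a surjective p-morphism. *)
Definition validates_chi (F Q : finType) (leF : rel F) (leQ : rel Q) : Prop :=
  ~ exists (U : {set F}) (f : F -> Q),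
      is_upset leF U /\ pmorphism_on leF leQ U f /\ f @: U = [set: Q].

(* 3-fork: 0 = r, 1,2,3 = a,b,c *)
Definition fork3_le : rel 'I_4 := fun i j => (i == j) || (val i == 0).
(* Scott frame: 0 = r, 1 = u1, 2 = u2, 3 = v *)
Definition scott_le : rel 'I_4 :=
  fun i j => (i == j) || (val i == 0) || ((val i == 1) && (val j == 2)).

(* A frame validates PL = the least intermediate logic containing
   chi(3-fork) and chi(Scott) iff it validates these two formulas. *)
Definition validates_PL (F : finType) (leF : rel F) : Prop :=
  validates_chi leF fork3_le /\ validates_chi leF scott_le.

(* Plane ordering of Top(T), given as the enumeration s = [t_1; ...; t_k]:
   s lists exactly the top elements without repetition, and for every x
   the indices of the tops above x form an interval. *)
Definition plane_enum (T : finType) (le : rel T) (s : seq T) : Prop :=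
  uniq s /\ (forall x, (x \in s) = is_top le x) /\
  forall (x : T) (i j l : nat), i <= j -> j <= l -> l < size s ->
    (forall d, le x (nth d s i)) -> (forall d, le x (nth d s l)) ->
    (forall d, le x (nth d s j)).

(* The sawed tree based on (T, s): carrier T + {s_0, ..., s_(k-2)},
   s_i lying above t_i = nth s i and t_(i+1) = nth s i.+1 (transitively closed). *)
Definition sawed_le (T : finType) (le : rel T) (r : T) (s : seq T)
    : rel (T + 'I_(size s).-1) :=
  fun a b =>
    match a, b with
    | inl x, inl y => le x y
    | inl x, inr i => le x (nth r s i) || le x (nth r s i.+1)
    | inr i, inr j => i == j
    | inr _, inl _ => false
    end.
Arguments sawed_le [T] le r s _ _.

From mathcomp Require Import all_boot all_order.
Set Implicit Arguments. Unset Strict Implicit. Unset Printing Implicit Defensive.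
Import Order.TTheory.

(* The 3-fork and the Scott frame give two local properties of F. A point of
   depth at most one sees at most two tops. For a point p of depth at least
   two, the tops above p are connected under the relation "both lie above one
   strict successor of p": otherwise a non-top successor of p, the tops in its
   component and the remaining tops would form a copy of the Scott frame.
   Hence, for tops a and b above p, there is a walk of triples (c, a', b'),
   with a', b' tops above the strict successor c and consecutive triples
   sharing a top, which leads from a to b and visits every strict successor of
   p. Unfolding these walks from the root down to depth n - 1 gives a tree
   whose leaves, read from left to right, carry triples in which adjacent
   leaves share a top. Mapping each node to the point of its triple and the saw
   between two adjacent leaves to their shared top is a surjective
   p-morphism from the sawed tree onto F. *)

Definition o0 : 'I_4 := @Ordinal 4 0 isT.
Definition o1 : 'I_4 := @Ordinal 4 1 isT.
Definition o2 : 'I_4 := @Ordinal 4 2 isT.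
Definition o3 : 'I_4 := @Ordinal 4 3 isT.

Lemma ord4_cases (j : 'I_4) : [\/ j = o0, j = o1, j = o2 | j = o3].
Proof.
case: j => [[|[|[|[|k]]]] ?] //.
- by apply: Or41; apply: val_inj.
- by apply: Or42; apply: val_inj.
- by apply: Or43; apply: val_inj.
- by apply: Or44; apply: val_inj.
Qed.

Lemma imset_up (T Q : finType) (leQ : rel Q) (A : {set T}) (f : T -> Q) (x : T) :
  (forall y, y \in A -> leQ (f x) (f y)) ->
  (forall j, leQ (f x) j -> exists2 y, y \in A & f y = j) ->
  f @: A = up leQ (f x).
Proof.
move=> fA Af; apply/setP => j; rewrite inE.
apply/imsetP/idP => [[y Ay ->]|/Af[y Ay <-]]; [exact: fA | by exists y].
Qed.

Section Links.
Variable T : eqType.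
Implicit Types (a b c : T) (t : T * T * T) (W : seq (T * T * T)).

Definition adjacent t t' : bool := t.2 == t'.1.2.

(** The dummy triple [(a, a, a)] only provides the right top [a] that the
    first triple of [W] must start from. *)
Definition links a b W : bool :=
  path adjacent (a, a, a) W && ((last (a, a, a) W).2 == b).

Lemma path_adjacent_start t t' W : t.2 = t'.2 -> path adjacent t W = path adjacent t' W.
Proof. by case: W => //= ? ? E; rewrite /adjacent E. Qed.

Lemma links1 t : links t.1.2 t.2 [:: t].
Proof. by rewrite /links /= /adjacent !eqxx. Qed.

Lemma links_cat a b c W1 W2 : links a b W1 -> links b c W2 -> links a c (W1 ++ W2).
Proof.
case/andP=> p1 /eqP l1 /andP[p2 /eqP l2].
rewrite /links cat_path p1 last_cat (@path_adjacent_start _ (b, b, b)) ?p2 //=.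
by case: W2 {p2} l2 => [|t W2] /= <-; rewrite ?l1.
Qed.

Lemma links_nil a b : links a b [::] = (a == b).
Proof. by rewrite /links. Qed.

Lemma links_cons a b t W :
  links a b (t :: W) = (a == t.1.2) && links t.2 b W.
Proof.
rewrite /links /= {1}/adjacent /= -andbA; congr (_ && _).
by rewrite (@path_adjacent_start t (t.2, t.2, t.2)) //; case: W.
Qed.

Lemma links_flatten a b W (B : T * T * T -> seq (T * T * T)) :
  links a b W -> (forall t, t \in W -> links t.1.2 t.2 (B t)) ->
  links a b (flatten [seq B t | t <- W]).
Proof.
elim: W a => [|t W IH] a /=; first by rewrite !links_nil.
rewrite links_cons => /andP[/eqP -> tbW] WB.
apply: links_cat (WB t (mem_head _ _)) (IH _ tbW _) => t' t'W.
by apply: WB; rewrite inE t'W orbT.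
Qed.

End Links.

Section Frame.
Variables (F : finType) (leF : rel F).
Hypotheses (leF_refl : reflexive leF) (leF_anti : antisymmetric leF)
  (leF_trans : transitive leF).

Local Notation top := (is_top leF).

Lemma leF_anti2 x y : leF x y -> leF y x -> x = y.
Proof. by move=> xy yx; apply: leF_anti; rewrite xy yx. Qed.

Lemma up_upset x : is_upset leF (up leF x).
Proof. by move=> y z; rewrite !inE => xy /(leF_trans xy). Qed.

Definition ltF (p c : F) : bool := leF p c && (c != p).

Lemma ltF_trans_le p c y : ltF p c -> leF c y -> ltF p y.
Proof.
case/andP=> pc cp cy; rewrite /ltF (leF_trans pc cy); apply: contraNneq cp => yp.
by rewrite (leF_anti2 pc) // -yp.
Qed.

Definition tops (p : F) : {set F} := [set q | top q && leF p q].

Definition depth_le1 (p : F) : bool := [forall c, ltF p c ==> top c].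

Lemma topP x : reflect (forall y, leF x y -> y = x) (top x).
Proof.
apply: (iffP forallP) => [xtop y xy|xtop y]; first exact/eqP/(implyP (xtop y)).
by apply/implyP => /xtop ->.
Qed.

Lemma mem_tops_top p q : q \in tops p -> top q.
Proof. by rewrite inE => /andP[]. Qed.

Lemma mem_tops_le p q : q \in tops p -> leF p q.
Proof. by rewrite inE => /andP[]. Qed.

Lemma tops_nonempty x : exists q, q \in tops x.
Proof.
have [y xy ymin] := arg_minnP (fun y => #|up leF y|) (leF_refl x).
exists y; rewrite inE xy andbT; apply/topP => z yz; apply/eqP/contraT => zy.
have := ymin z (leF_trans xy yz); rewrite leqNgt => /negP; case.
apply/proper_card/properP; split.
  by apply/subsetP => u; rewrite !inE; apply: leF_trans.
exists y; rewrite !inE ?leF_refl //; apply: contra zy => zy.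
by rewrite (leF_anti2 yz zy).
Qed.

Lemma tops_sub p c : leF p c -> tops c \subset tops p.
Proof.
move=> pc; apply/subsetP => q; rewrite !inE => /andP[-> cq].
exact: leF_trans cq.
Qed.

Lemma tops_top q : top q -> tops q = [set q].
Proof.
move=> qtop; apply/setP => z; rewrite !inE.
by apply/andP/eqP => [[_ /(topP _ qtop)]|->].
Qed.

Lemma top_depth_le1 q : top q -> depth_le1 q.
Proof.
move=> qtop; apply/forallP => c; apply/implyP => /andP[qc].
by rewrite (topP _ qtop c qc) eqxx.
Qed.

Lemma depth_le1_succ_top p c : depth_le1 p -> ltF p c -> top c.
Proof. by move=> /forallP /(_ c) /implyP. Qed.

Lemma fork_free_no_three_tops c q1 q2 q3 :
  validates_chi leF fork3_le -> depth_le1 c ->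
  q1 \in tops c -> q2 \in tops c -> q3 \in tops c ->
  [&& q1 != q2, q1 != q3 & q2 != q3] -> False.
Proof.
move=> fork_free cd1 t1 t2 t3 /and3P[n12 n13 n23].
have neq_c q q' : q \in tops c -> q' \in tops c -> q != q' -> q != c.
  move=> tq tq' qq'; apply: contra qq' => /eqP qc.
  have ctop : top c by rewrite -qc (mem_tops_top tq).
  by rewrite qc (topP _ ctop q' (mem_tops_le tq')).
have [n1c n2c] := (neq_c _ _ t1 t2 n12, neq_c _ _ t2 t3 n23).
have n3c : q3 != c by apply: neq_c t3 t1 _; rewrite eq_sym.
pose f y := if y == c then o0 else if y == q1 then o1 else if y == q2 then o2 else o3.
have fc : f c = o0 by rewrite /f eqxx.
have image_c : f @: up leF c = up fork3_le (f c).
  apply: imset_up => [y _|j _]; first by rewrite fc /fork3_le orbT.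
  case: (ord4_cases j) => ->.
  - by exists c; rewrite ?inE ?leF_refl.
  - by exists q1; rewrite ?inE ?(mem_tops_le t1) // /f (negbTE n1c) eqxx.
  - exists q2; rewrite ?inE ?(mem_tops_le t2) //.
    by rewrite /f (negbTE n2c) eq_sym (negbTE n12) eqxx.
  - exists q3; rewrite ?inE ?(mem_tops_le t3) //.
    by rewrite /f (negbTE n3c) eq_sym (negbTE n13) eq_sym (negbTE n23).
apply: fork_free; exists (up leF c), f; split; [exact: up_upset|split].
  move=> x; rewrite inE => cx; case: (eqVneq x c) => [->|xc]; first by rewrite setIid.
  have xtop : top x by apply: depth_le1_succ_top cd1 _; rewrite /ltF cx xc.
  have fx : f x != o0 by rewrite /f (negbTE xc); do 2 case: ifP => //.
  apply: imset_up => [y|j].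
    by rewrite !inE => /andP[_ /(topP _ xtop) ->]; rewrite /fork3_le eqxx.
  rewrite /fork3_le => /orP[/eqP<-|/eqP f0]; first by exists x; rewrite ?inE ?cx ?leF_refl.
  by case/eqP: fx; apply: val_inj.
by rewrite image_c fc; apply/setP => j; rewrite !inE /fork3_le orbT.
Qed.

Lemma fork_free_two_tops c : validates_chi leF fork3_le -> depth_le1 c ->
  exists a b, [/\ a \in tops c, b \in tops c & tops c \subset [set a; b]].
Proof.
move=> fork_free cd1; have [a ta] := tops_nonempty c.
have [[b]|no_b] := set0Pn (tops c :\ a); last first.
  exists a, a; split => //; apply/subsetP => z tz; rewrite !inE orbb.
  by apply: contraT => za; case: no_b; exists z; rewrite in_setD1 za.
rewrite in_setD1 => /andP[ba tb]; exists a, b; split => //.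
apply/subsetP => z tz; apply: contraT; rewrite !inE negb_or => /andP[za zb].
case: (fork_free_no_three_tops fork_free cd1 ta tb tz).
by rewrite eq_sym ba eq_sym za eq_sym zb.
Qed.

Lemma tops_not_sub_setD p y (P : {set F}) :
  tops y \subset P -> ~~ (tops y \subset tops p :\: P).
Proof.
move=> yP; apply/negP => /subsetP yQ; have [q tq] := tops_nonempty y.
by move: (yQ q tq); rewrite inE (subsetP yP q tq).
Qed.

Section ScottMap.
Variables (p : F) (P : {set F}).
Hypothesis P_closed :
  forall c, ltF p c -> (tops c \subset P) || (tops c \subset tops p :\: P).

(** Given a non-top successor of [p] whose tops lie in [P], the point [p], that
    successor, the tops in [P] and the tops of [p] outside [P] play the roles
    of [r], [u1], [u2] and [v] of the Scott frame. *)
Definition scott_map (y : F) : 'I_4 :=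
  if y == p then o0 else if tops y \subset tops p :\: P then o3
  else if top y then o2 else o1.

Lemma scott_map_up x : ltF p x ->
  scott_map @: (up leF p :&: up leF x) = up scott_le (scott_map x).
Proof.
move=> px; have [pxle xp] := andP px.
have -> : up leF p :&: up leF x = up leF x.
  by apply/setIidPr/subsetP => y; rewrite !inE; apply: leF_trans.
have py y : leF x y -> y != p by move=> xy; case/andP: (ltF_trans_le px xy).
have [xQ|xQ] := boolP (tops x \subset tops p :\: P).
  have fx : scott_map x = o3 by rewrite /scott_map (negbTE xp) xQ.
  apply: imset_up => [y|j]; rewrite fx; last first.
    by rewrite /scott_le /= !orbF => /eqP <-; exists x; rewrite ?inE ?leF_refl.
  rewrite inE => xy; rewrite /scott_map (negbTE (py _ xy)).
  by rewrite (subset_trans (tops_sub xy) xQ) /scott_le eqxx.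
have xP : tops x \subset P by move: (P_closed px); rewrite (negbTE xQ) orbF.
have fy y : leF x y -> scott_map y = if top y then o2 else o1.
  move=> xy; rewrite /scott_map (negbTE (py _ xy)).
  by rewrite (negbTE (tops_not_sub_setD p (subset_trans (tops_sub xy) xP))).
have [xtop|xtop] := boolP (top x).
  apply: imset_up => [y|j]; rewrite (fy x) // xtop.
    by rewrite inE => /(topP _ xtop) ->; rewrite (fy x) // xtop /scott_le eqxx.
  by rewrite /scott_le /= !orbF => /eqP <-; exists x; rewrite ?inE ?(fy x) ?xtop.
apply: imset_up => [y|j]; rewrite (fy x) // (negbTE xtop).
  by rewrite inE => xy; rewrite fy //; case: ifP; rewrite /scott_le.
rewrite /scott_le /= orbF => /orP[/eqP<-|/eqP j2].
  by exists x; rewrite ?inE ?(fy x) ?(negbTE xtop).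
have [q tq] := tops_nonempty x; exists q; first by rewrite inE (mem_tops_le tq).
by rewrite fy ?(mem_tops_le tq) ?(mem_tops_top tq) //; apply: val_inj.
Qed.

Lemma scott_free_no_split w :
  validates_chi leF scott_le -> ltF p w -> ~~ top w -> tops w \subset P ->
  P \subset tops p -> (exists q, q \in tops p :\: P) -> False.
Proof.
move=> scott_free pw wtop wP Pp [q' tq'].
have [pwle wp] := andP pw.
have ptop : ~~ top p by apply: contra wp => /topP/(_ w pwle)/eqP.
have fp : scott_map p = o0 by rewrite /scott_map eqxx.
have image_p : scott_map @: up leF p = up scott_le (scott_map p).
  apply: imset_up => [y _|j _]; first by rewrite fp /scott_le orbT.
  have [q tq] := tops_nonempty w; have qP := subsetP wP q tq.
  have qtop := mem_tops_top tq.
  have q'p : q' \in tops p by move: tq'; rewrite in_setD => /andP[].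
  have q'top := mem_tops_top q'p.
  have tops_p_neq r : top r -> r != p by move=> rtop; apply: contraNneq ptop => <-.
  case: (ord4_cases j) => ->.
  - by exists p; rewrite ?inE ?leF_refl.
  - exists w; rewrite ?inE // /scott_map (negbTE wp).
    by rewrite (negbTE (tops_not_sub_setD p wP)) (negbTE wtop).
  - exists q; first by rewrite inE (mem_tops_le (subsetP Pp q qP)).
    rewrite /scott_map (negbTE (tops_p_neq _ qtop)) (tops_top qtop) qtop.
    by rewrite sub1set inE qP.
  - exists q'; first by rewrite inE (mem_tops_le q'p).
    by rewrite /scott_map (negbTE (tops_p_neq _ q'top)) (tops_top q'top) sub1set tq'.
apply: scott_free; exists (up leF p), scott_map; split; [exact: up_upset|split].
  move=> x; rewrite inE => px; case: (eqVneq x p) => [->|xp]; first by rewrite setIid.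
  by apply: scott_map_up; rewrite /ltF px xp.
by rewrite image_p fp; apply/setP => j; rewrite !inE /scott_le orbT.
Qed.

End ScottMap.

Lemma not_depth_le1_witness p : ~~ depth_le1 p -> exists2 w, ltF p w & ~~ top w.
Proof.
by rewrite negb_forall => /existsP[w]; rewrite negb_imply => /andP[pw wtop]; exists w.
Qed.

Lemma chain_setU1 p (C : {set F}) : is_chain leF C ->
  (forall y, y \in C -> ltF p y) -> is_chain leF (p |: C) /\ #|p |: C| = #|C|.+1.
Proof.
move=> C_chain pC; split; last first.
  by rewrite cardsU1; case: (boolP (p \in C)) => [/pC /andP[_ /eqP]|].
have pleC y : y \in C -> leF p y by case/pC/andP.
move=> x y /setU1P[->|xC] /setU1P[->|yC]; rewrite ?leF_refl ?pleC ?orbT //.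
exact: C_chain.
Qed.

Lemma not_depth_le1_chain p : ~~ depth_le1 p ->
  exists C : {set F}, [/\ is_chain leF C, #|C| = 3 & forall y, y \in C -> leF p y].
Proof.
case/(not_depth_le1_witness) => w pw /forallPn[z]; rewrite negb_imply => /andP[wz zw].
have z_chain : is_chain leF [set z] by move=> x y /set1P-> /set1P->; rewrite leF_refl.
have wz' : forall y, y \in [set z] -> ltF w y by move=> y /set1P->; rewrite /ltF wz zw.
have [wz_chain wz_card] := chain_setU1 z_chain wz'.
have pwz : forall y, y \in w |: [set z] -> ltF p y.
  by move=> y /setU1P[->|/wz'/andP[wy _]] //; apply: ltF_trans_le pw wy.
have [pwz_chain pwz_card] := chain_setU1 wz_chain pwz.
exists (p |: (w |: [set z])); split; rewrite ?pwz_card ?wz_card ?cards1 //.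
by move=> y /setU1P[->|/pwz/andP[]//]; rewrite leF_refl.
Qed.

Hypothesis fork_free : validates_chi leF fork3_le.
Hypothesis scott_free : validates_chi leF scott_le.

(** A triple [(c, a, b)] is a point [c] with a chosen left top [a] and right
    top [b] above it; at depth at most one these must be all the tops of [c]. *)
Definition triple_ok (t : F * F * F) : bool :=
  [&& t.1.2 \in tops t.1.1, t.2 \in tops t.1.1 &
      depth_le1 t.1.1 ==> (tops t.1.1 \subset [set t.1.2; t.2])].

Definition triple_above (p : F) (t : F * F * F) : bool := triple_ok t && ltF p t.1.1.

Definition tops_edge (p q q' : F) : bool :=
  [exists t, [&& triple_above p t, t.1.2 == q & t.2 == q']].

Lemma exists_triple_ok c : exists a b, triple_ok (c, a, b).
Proof.
have [cd1|cd1] := boolP (depth_le1 c).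
  have [a [b [ta tb sab]]] := fork_free_two_tops fork_free cd1.
  by exists a, b; rewrite /triple_ok /= ta tb sab implybT.
have [a ta] := tops_nonempty c; by exists a, a; rewrite /triple_ok /= ta (negbTE cd1).
Qed.

Lemma tops_edge_succ p c x y : ltF p c -> x \in tops c -> y \in tops c ->
  connect (tops_edge p) x y.
Proof.
move=> pc tx ty; case: (eqVneq x y) => [->|xy]; first exact: connect0.
apply/connect1/existsP; exists (c, x, y); rewrite /triple_above /triple_ok /= tx ty pc.
rewrite !eqxx !andbT /=; apply/implyP => cd1; apply/subsetP => z tz.
rewrite !inE; apply: contraT; rewrite negb_or => /andP[zx zy].
by case: (fork_free_no_three_tops fork_free cd1 tx ty tz); rewrite xy eq_sym zx eq_sym zy.
Qed.

(** Otherwise the tops reachable from [q0] form a set [P] as in [ScottMap],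
    and a non-top successor of [p] yields a copy of the Scott frame. *)
Lemma tops_connected p q0 q : ~~ depth_le1 p -> q0 \in tops p -> q \in tops p ->
  connect (tops_edge p) q0 q.
Proof.
move=> pd1 tq0 tq; apply: contraT => q0q; exfalso.
pose P := [set x in tops p | connect (tops_edge p) q0 x].
have Pp : P \subset tops p by apply/subsetP => x; rewrite inE => /andP[].
have P_closed c : ltF p c -> (tops c \subset P) || (tops c \subset tops p :\: P).
  move=> pc; have [a ta] := tops_nonempty c.
  have tp z : z \in tops c -> z \in tops p by apply/subsetP/tops_sub; case/andP: pc.
  have [q0a|q0a] := boolP (connect (tops_edge p) q0 a); apply/orP; [left|right];
    apply/subsetP => z tz.
    by rewrite in_set tp //= (connect_trans q0a (tops_edge_succ pc ta tz)).
  rewrite in_setD tp // andbT in_set tp //=.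
  by apply: contra q0a => q0z; apply: connect_trans q0z (tops_edge_succ pc tz ta).
have [w pw wtop] := not_depth_le1_witness pd1.
have qQ : q \in tops p :\: P by rewrite in_setD tq andbT inE tq (negbTE q0q).
have q0P : q0 \in P by rewrite inE tq0 connect0.
case/orP: (P_closed w pw) => wP.
  exact: (scott_free_no_split P_closed scott_free pw wtop wP Pp (ex_intro _ q qQ)).
have PE : tops p :\: (tops p :\: P) = P by rewrite setDDr setDv set0U; apply/setIidPr.
apply: (scott_free_no_split _ scott_free pw wtop wP (subsetDl _ _)); rewrite PE.
  by move=> c pc; rewrite orbC; apply: P_closed.
by exists q0.
Qed.

Lemma walk_of_connect p q q' : connect (tops_edge p) q q' ->
  exists2 W, all (triple_above p) W & links q q' W.
Proof.
case/connectP => l; elim: l q => [|q1 l IH] q /=.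
  by move=> _ ->; exists [::]; rewrite ?/links /= ?eqxx.
case/andP => /existsP[t /and3P[tp /eqP tq /eqP tq1]] ql q'E.
have [W pW qW] := IH q1 ql q'E; exists (t :: W); first by rewrite /= tp.
by rewrite -cat1s; apply: links_cat qW; rewrite -tq -tq1 links1.
Qed.

Lemma walk_cover p (l : seq F) q r : ~~ depth_le1 p ->
  q \in tops p -> r \in tops p -> all (ltF p) l ->
  exists W, [/\ all (triple_above p) W, links q r W &
                {subset l <= [seq t.1.1 | t <- W]}].
Proof.
move=> pd1; elim: l q => [|c l IH] q tq tr.
  by have [W pW qW] := walk_of_connect (tops_connected pd1 tq tr); exists W.
case/andP => pc pl; have [a [b tcab]] := exists_triple_ok c.
have /and3P[ta tb _] := tcab.
have tp z : z \in tops c -> z \in tops p by apply/subsetP/tops_sub; case/andP: pc.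
have [W1 pW1 qW1] := walk_of_connect (tops_connected pd1 tq (tp _ ta)).
have [W2 [pW2 bW2 lW2]] := IH b (tp _ tb) tr pl.
exists (W1 ++ (c, a, b) :: W2); split.
- by rewrite all_cat pW1 /= /triple_above tcab pc pW2.
- by apply: links_cat qW1 _; rewrite -cat1s; apply: links_cat bW2; apply: links1.
- by move=> z; rewrite inE map_cat mem_cat /= inE => /orP[->|/lW2->]; rewrite ?orbT.
Qed.

Lemma triple_above_top p q : ~~ depth_le1 p -> q \in tops p -> triple_above p (q, q, q).
Proof.
move=> pd1 tq; have qtop := mem_tops_top tq.
rewrite /triple_above /triple_ok /ltF /= tops_top // set11 setUid subxx implybT.
rewrite (mem_tops_le tq) /=; apply: contraNneq pd1 => qp.
by rewrite -qp top_depth_le1.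
Qed.

(** Starting and ending the walk with [(a, a, a)] and [(b, b, b)] makes the
    first and last leaves under the root be labelled by a top, which excludes
    the boundary cases in [saw_map_cover_saw]. *)
Definition spanning_walk (p a b : F) (W : seq (F * F * F)) : bool :=
  [&& W == (a, a, a) :: behead W, last (a, a, a) W == (b, b, b), links a b W,
      all (triple_above p) W & [forall c, ltF p c ==> (c \in [seq t.1.1 | t <- W])]].

Lemma spanning_walk_exists p a b : ~~ depth_le1 p ->
  a \in tops p -> b \in tops p -> exists W, spanning_walk p a b W.
Proof.
move=> pd1 ta tb.
have pl : all (ltF p) (enum (ltF p)) by apply/allP => c; rewrite mem_enum.
have [W [pW abW cW]] := walk_cover pd1 ta tb pl.
exists ((a, a, a) :: W ++ [:: (b, b, b)]); apply/and5P; split => //=.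
- by rewrite last_cat.
- exact: (links_cat (links1 (a, a, a)) (links_cat abW (links1 (b, b, b)))).
- by rewrite all_cat pW /= !triple_above_top.
- apply/forallP => c; apply/implyP => pc; rewrite inE map_cat mem_cat.
  by rewrite cW ?orbT // mem_enum.
Qed.

End Frame.

Section Prefix.
Variable T : eqType.
Implicit Types (a b x : seq T).

Lemma prefix_size_eq a b : prefix a b -> size b <= size a -> a = b.
Proof. by rewrite prefixE => /eqP E ba; rewrite -E take_oversize. Qed.

Lemma prefix_anti a b : prefix a b -> prefix b a -> a = b.
Proof. by move=> ab /size_prefix; apply: prefix_size_eq. Qed.

Lemma prefix_total a b x : prefix a x -> prefix b x -> prefix a b || prefix b a.
Proof.
rewrite !prefixE => /eqP xa /eqP xb; case: (leqP (size a) (size b)) => ab.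
  by apply/orP; left; rewrite -xb take_takel // xa.
by apply/orP; right; rewrite -xa take_takel ?xb // ltnW.
Qed.

End Prefix.

Local Notation lexlt := (@Order.lt _ (seqlexi nat)).
Local Notation lexle := (@Order.le _ (seqlexi nat)).

Lemma pairwise_lexlt_blocks (ss : nat -> seq (seq nat)) i k :
  (forall j, pairwise lexlt (ss j)) ->
  pairwise lexlt (flatten [seq map (cons j) (ss j) | j <- iota i k]).
Proof.
move=> ss_lt; elim: k i => [|k IH] i //=.
rewrite pairwise_cat pairwise_map IH // andbT.
apply/andP; split; last by apply: sub_pairwise (ss_lt i) => u v /=; rewrite eqhead_ltxiE.
apply/allrelP => _ v /mapP[u _ ->] /flatten_mapP[j]; rewrite mem_iota => /andP[ij _].
by case/mapP=> w _ ->; rewrite ltxi_cons !leEnat ltnW //= leqNgt ij.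
Qed.

Lemma prefix_lex_interval (x a b c : seq nat) :
  prefix x a -> prefix x c -> lexle a b -> lexle b c -> prefix x b.
Proof.
elim: x a b c => [|i x IH] a b c; first by move=> *; apply: prefix0s.
case: a => [|i1 a] //; case: c => [|i3 c] //; rewrite !prefix_cons.
case/andP=> /eqP <- xa /andP[/eqP <- xc].
case: b => [|j b]; first by rewrite lexis0.
rewrite !lexi_cons !leEnat prefix_cons.
by case: (ltngtP i j) => //= _; exact: IH.
Qed.

Section AddressTree.
Variable F : finType.
Local Notation S := (F * F * F)%type.
Variable step : S -> seq S.
Hypothesis step_ne : forall t, step t != [::].
Hypothesis step_links : forall t, links t.1.2 t.2 (step t).

Definition child (t : S) (j : nat) : S := nth t (step t) j.

Fixpoint label (t : S) (u : seq nat) : S :=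
  if u is j :: u' then label (child t j) u' else t.

Fixpoint is_addr (t : S) (u : seq nat) : bool :=
  if u is j :: u' then (j < size (step t)) && is_addr (child t j) u' else true.

Fixpoint level (m : nat) (t : S) : seq (seq nat) :=
  if m is m'.+1 then
    flatten [seq map (cons j) (level m' (child t j)) | j <- iota 0 (size (step t))]
  else [:: [::]].

Lemma step_size_gt0 t : 0 < size (step t).
Proof. by rewrite lt0n size_eq0 step_ne. Qed.

Lemma label_cat t u v : label t (u ++ v) = label (label t u) v.
Proof. by elim: u t => //= j u IH t. Qed.

Lemma is_addr_cat t u v : is_addr t (u ++ v) = is_addr t u && is_addr (label t u) v.
Proof. by elim: u t => //= j u IH t; rewrite IH andbA. Qed.

Lemma is_addr_nseq0 t k : is_addr t (nseq k 0).
Proof. by elim: k t => //= k IH t; rewrite IH step_size_gt0. Qed.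

Lemma mem_level m t u : (u \in level m t) = (size u == m) && is_addr t u.
Proof.
elim: m t u => [|m IH] t [|j u] //=; first by apply/flatten_mapP => -[j _ /mapP[]].
apply/flatten_mapP/idP => [[i /[!mem_iota] /= ilt /mapP[v vl [-> ->]]]|].
  by move: vl; rewrite IH eqSS ilt.
rewrite eqSS => /andP[um /andP[jlt ju]]; exists j; first by rewrite mem_iota.
by apply/mapP; exists u; rewrite // IH um.
Qed.

Lemma nseq0_level m t : nseq m 0 \in level m t.
Proof. by rewrite mem_level size_nseq eqxx is_addr_nseq0. Qed.

Lemma level_ne m t : level m t != [::].
Proof. by apply: contraTneq (nseq0_level m t) => ->. Qed.

Lemma level_lexlt m t : pairwise lexlt (level m t).
Proof. by elim: m t => //= m IH t; apply: pairwise_lexlt_blocks. Qed.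

Lemma label_level_succ m t : [seq label t u | u <- level m.+1 t] =
  flatten [seq [seq label t' u | u <- level m t'] | t' <- step t].
Proof.
rewrite /= map_flatten -map_comp -[in RHS](mkseq_nth t (step t)) /mkseq -map_comp.
by congr flatten; apply: eq_map => j /=; rewrite -map_comp.
Qed.

Lemma links_level m t : links t.1.2 t.2 [seq label t u | u <- level m t].
Proof.
elim: m t => [|m IH] t; first exact: links1.
by rewrite label_level_succ; apply: links_flatten (step_links t) (fun t' _ => IH t').
Qed.

Lemma head_level m t :
  head [::] (level m.+1 t) = 0 :: head [::] (level m (child t 0)).
Proof.
rewrite /= -(prednK (step_size_gt0 t)) /=.
by case: (level m (child t 0)) (level_ne m (child t 0)).
Qed.

Lemma last_level m t (k := (size (step t)).-1) :
  last [::] (level m.+1 t) = k :: last [::] (level m (child t k)).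
Proof.
rewrite /= -(prednK (step_size_gt0 t)) -/k -addn1 iotaD map_cat flatten_cat last_cat /=.
rewrite cats0; case: (level m (child t k)) (level_ne m (child t k)) => // v l _.
by rewrite /= (last_map (cons k)).
Qed.

Lemma size_step_le_level m t : size (step t) <= size (level m.+1 t).
Proof.
rewrite /= size_flatten /shape -map_comp -{1}(size_iota 0 (size (step t))).
elim: (iota _ _) => //= j s IH.
by rewrite size_map -add1n leq_add // lt0n size_eq0 level_ne.
Qed.
Variables (h : nat) (root : S).

Definition nodes : seq (seq nat) := flatten [seq level m root | m <- iota 0 h.+1].

Lemma mem_nodes u : (u \in nodes) = (size u <= h) && is_addr root u.
Proof.
apply/flatten_mapP/idP => [[m /[!mem_iota] /= mh]|/andP[uh ua]].
  by rewrite mem_level => /andP[/eqP -> ->]; rewrite -ltnS mh.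
by exists (size u); rewrite ?mem_iota ?mem_level ?eqxx.
Qed.

Lemma take_node u j : u \in nodes -> take j u \in nodes.
Proof.
rewrite !mem_nodes size_take_min => /andP[uh]; rewrite (leq_trans (geq_minr _ _)) //=.
by rewrite -{1}(cat_take_drop j u) is_addr_cat => /andP[].
Qed.

Lemma nil_node : [::] \in nodes.
Proof. by rewrite mem_nodes. Qed.

(** The tree obtained by unfolding [step] from [root] down to depth [h]: its
    nodes are addresses (sequences of child indices), ordered by prefix. *)
Definition tree := seq_sub nodes.
Definition tree_root : tree := SeqSub nil_node.
Definition tree_le : rel tree := fun x y => prefix (val x) (val y).

Lemma tree_is_addr (x : tree) : is_addr root (val x).
Proof. by have := ssvalP x; rewrite mem_nodes => /andP[]. Qed.

Lemma tree_size (x : tree) : size (val x) <= h.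
Proof. by have := ssvalP x; rewrite mem_nodes => /andP[]. Qed.

Lemma val_insubd_node u : u \in nodes -> val (insubd tree_root u : tree) = u.
Proof. exact: insubdK. Qed.

Lemma tree_le_tree : is_tree tree_le tree_root.
Proof.
split; [split; [split; [|split]|] |].
- by move=> x; apply: prefix_refl.
- by move=> x y /andP[xy yx]; apply/val_inj/prefix_anti.
- by move=> y x z; apply: prefix_trans.
- by move=> x; apply: prefix0s.
- by move=> x y z; rewrite !inE; apply: prefix_total.
Qed.

Lemma card_down_tree (x : tree) : #|down tree_le x| = (size (val x)).+1.
Proof.
pose g (j : 'I_(size (val x)).+1) : tree := insubd tree_root (take j (val x)).
have gE j : val (g j) = take j (val x) by rewrite val_insubd_node ?take_node ?ssvalP.
have -> : down tree_le x = g @: setT.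
  apply/setP => y; rewrite inE; apply/idP/imsetP => [yx|[j _ ->]]; last first.
    by rewrite /tree_le gE prefix_take.
  exists (inord (size (val y))); rewrite ?inE //; apply: val_inj.
  by rewrite gE inordK ?ltnS ?size_prefix //; move: yx; rewrite /tree_le prefixE => /eqP.
rewrite card_imset ?cardsT ?card_ord // => i j /(congr1 (fun t : tree => size (val t))).
have ile (k : 'I_(size (val x)).+1) : k <= size (val x) by rewrite -ltnS.
by rewrite /= !gE !size_take_min (minn_idPl (ile i)) (minn_idPl (ile j)); apply: val_inj.
Qed.

Lemma is_top_tree (x : tree) : is_top tree_le x = (size (val x) == h).
Proof.
apply/forallP/eqP => [xtop|xh y]; last first.
  by apply/implyP => xy; apply/eqP/val_inj/esym/prefix_size_eq; rewrite ?xh ?tree_size.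
apply/eqP; apply: contraT => xh.
have xlt : size (val x) < h by rewrite ltn_neqAle xh tree_size.
have x0 : val x ++ [:: 0] \in nodes.
  by rewrite mem_nodes size_cat addn1 xlt is_addr_cat tree_is_addr (is_addr_nseq0 _ 1).
have /implyP := xtop (insubd tree_root (val x ++ [:: 0])).
rewrite /tree_le val_insubd_node // prefix_prefix => /(_ isT) /eqP /(congr1 (size \o val)).
by rewrite /= val_insubd_node // size_cat addn1 => /eqP; rewrite eqn_leq ltnn.
Qed.

Definition leaves : seq (seq nat) := level h root.
Definition leaf_enum : seq tree := map (insubd tree_root) leaves.

Lemma leaf_node u : u \in leaves -> u \in nodes.
Proof. by rewrite mem_level mem_nodes => /andP[/eqP -> ->]; rewrite leqnn. Qed.

Lemma tree_height : has_height tree_le h.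
Proof.
split.
  have ul := nseq0_level h root; set u := nseq h 0 in ul; have un := leaf_node ul.
  exists (down tree_le (insubd tree_root u)); split; first exact: (proj2 tree_le_tree).
  rewrite card_down_tree val_insubd_node //.
  by move: ul; rewrite mem_level => /andP[/eqP ->].
move=> C C_chain; pose g (y : tree) : 'I_h.+1 := inord (size (val y)).
rewrite -(card_in_imset (f := g)); first by rewrite (leq_trans (max_card _)) ?card_ord.
move=> a b aC bC /(congr1 val); rewrite /= !inordK ?ltnS ?tree_size // => ab.
by case/orP: (C_chain a b aC bC) => [le|le]; [|apply/esym]; apply/val_inj/prefix_size_eq;
  rewrite ?ab.
Qed.

Lemma size_leaf_enum : size leaf_enum = size leaves.
Proof. exact: size_map. Qed.

Lemma val_leaf_enum : map val leaf_enum = leaves.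
Proof.
rewrite -map_comp -[RHS]map_id; apply/eq_in_map => u ul /=.
exact: val_insubd_node (leaf_node ul).
Qed.

Lemma nth_leaf_enum d i : i < size leaves -> val (nth d leaf_enum i) = nth [::] leaves i.
Proof.
move=> il; rewrite (set_nth_default tree_root) ?size_leaf_enum // (nth_map [::]) //.
by rewrite val_insubd_node // leaf_node // mem_nth.
Qed.

Lemma mem_leaf_enum (x : tree) : (x \in leaf_enum) = (val x \in leaves).
Proof. by rewrite -(mem_map val_inj) val_leaf_enum. Qed.

Lemma leaf_enum_plane : plane_enum tree_le leaf_enum.
Proof.
split.
  rewrite -(map_inj_uniq val_inj) val_leaf_enum.
  by apply: pairwise_uniq (level_lexlt _ _) => u; apply: ltxx.
split=> [x|x i j l ij jl ls xi xl d].
  by rewrite mem_leaf_enum is_top_tree mem_level tree_is_addr andbT.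
rewrite size_leaf_enum in ls.
have [js il] : j < size leaves /\ i < size leaves.
  by split; apply: leq_ltn_trans ls; rewrite // (leq_trans ij jl).
have := xi tree_root; have := xl tree_root; rewrite /tree_le !nth_leaf_enum // => xl' xi'.
have sorted_leaves : sorted lexlt leaves by apply/pairwise_sorted/level_lexlt.
have mono := lt_sorted_leq_nth ([::] : seqlexi nat) sorted_leaves.
by apply: (prefix_lex_interval xi' xl'); rewrite mono ?inE.
Qed.

Lemma sawed_tree_height : 1 < size leaves ->
  has_height (sawed_le tree_le tree_root leaf_enum) h.+1.
Proof.
move=> leaves2; have [_ C_max] := tree_height; split.
  have k_gt0 : 0 < (size leaf_enum).-1 by rewrite size_leaf_enum -subn1 subn_gt0.
  pose t0 := nth tree_root leaf_enum 0.
  have t0_size : size (val t0) = h.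
    have := mem_nth [::] (ltnW leaves2).
    by rewrite /t0 nth_leaf_enum ?(ltnW leaves2) // mem_level => /andP[/eqP].
  exists (inr (Ordinal k_gt0) |: (inl @: down tree_le t0)); split.
    move=> a b; rewrite !inE.
    move=> /orP[/eqP->|/imsetP[a' a't0 ->]] /orP[/eqP->|/imsetP[b' b't0 ->]] //=.
    - by move: b't0; rewrite inE => ->.
    - by move: a't0; rewrite inE => ->.
    - exact: (proj2 tree_le_tree t0).
  rewrite cardsU1 card_imset; last exact: inl_inj.
  by rewrite card_down_tree t0_size; case: imsetP => // -[].
move=> C C_chain.
pose CL := [set x | inl x \in C]; pose CR := [set i | inr i \in C].
have CL_card : #|CL| <= h.+1 by apply: C_max => x y; rewrite !inE; apply: C_chain.
have CR_card : #|CR| <= 1.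
  apply/card_le1_eqP => i j; rewrite !inE => iC jC.
  by case/orP: (C_chain _ _ iC jC) => /eqP.
have C_split : C \subset inl @: CL :|: inr @: CR.
  by apply/subsetP => -[x|i] xC; rewrite inE; apply/orP; [left|right]; apply/imsetP;
    [exists x|exists i]; rewrite ?inE.
rewrite -addn1; apply: leq_trans (subset_leq_card C_split) _.
apply: leq_trans (leq_card_setU _ _) (leq_add _ _).
  exact: leq_trans (leq_imset_card _ _) CL_card.
exact: leq_trans (leq_imset_card _ _) CR_card.
Qed.
End AddressTree.

Arguments tree_le {F step h root} _ _.

Section SawedCover.
Variables (F : finType) (leF : rel F) (rF : F) (n : nat).
Hypothesis n_ge2 : 2 <= n.
Hypotheses (leF_refl : reflexive leF) (leF_anti : antisymmetric leF)
  (leF_trans : transitive leF).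
Hypothesis rF_root : is_root leF rF.
Hypothesis F_height : has_height leF n.
Hypothesis fork_free : validates_chi leF fork3_le.
Hypothesis scott_free : validates_chi leF scott_le.

Local Notation S := (F * F * F)%type.
Local Notation top := (is_top leF).
Local Notation tops := (tops leF).
Local Notation depth_le1 := (depth_le1 leF).
Local Notation ltF := (ltF leF).
Local Notation triple_ok := (triple_ok leF).

(** The children of a node labelled [(p, a, b)] form a spanning walk from [a]
    to [b]; nodes of depth at most one are copied, so that all leaves of the
    unfolded tree have the same height. *)
Definition saw_step_spec (t : S) (W : seq S) : bool :=
  if ~~ depth_le1 t.1.1 && triple_ok t then spanning_walk leF t.1.1 t.1.2 t.2 W
  else W == [:: t].

Lemma saw_step_spec_exists t : exists W, saw_step_spec t W.
Proof.
rewrite /saw_step_spec; case: andP => [[td1 /and3P[ta tb _]]|_]; last by exists [:: t].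
exact: spanning_walk_exists.
Qed.

Definition saw_step (t : S) : seq S := xchoose (saw_step_spec_exists t).

Lemma saw_stepP t : saw_step_spec t (saw_step t).
Proof. exact: xchooseP. Qed.

Lemma saw_step_spanning t : ~~ depth_le1 t.1.1 -> triple_ok t ->
  spanning_walk leF t.1.1 t.1.2 t.2 (saw_step t).
Proof. by move=> td1 tok; have := saw_stepP t; rewrite /saw_step_spec td1 tok. Qed.

Lemma saw_step_depth_le1 t : depth_le1 t.1.1 -> saw_step t = [:: t].
Proof. by move=> td1; apply/eqP; have := saw_stepP t; rewrite /saw_step_spec td1. Qed.

Lemma saw_step_ne t : saw_step t != [::].
Proof.
have := saw_stepP t; rewrite /saw_step_spec.
by case: ifP => [_ /and5P[/eqP -> _ _ _ _]|_ /eqP ->].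
Qed.

Lemma saw_step_links t : links t.1.2 t.2 (saw_step t).
Proof.
have := saw_stepP t; rewrite /saw_step_spec.
by case: ifP => [_ /and5P[_ _ ->]|_ /eqP ->] //; apply: links1.
Qed.

Local Notation child := (child saw_step).
Local Notation label := (label saw_step).
Local Notation is_addr := (is_addr saw_step).

Lemma child_depth_le1 t j : depth_le1 t.1.1 -> child t j = t.
Proof.
by move=> td1; rewrite /child saw_step_depth_le1 //; case: j => [|j] /=; rewrite ?nth_nil.
Qed.

Lemma label_depth_le1 t u : depth_le1 t.1.1 -> label t u = t.
Proof. by move=> td1; elim: u => //= j u IH; rewrite child_depth_le1. Qed.

Lemma child_triple_above t j : ~~ depth_le1 t.1.1 -> triple_ok t -> j < size (saw_step t) ->
  triple_above leF t.1.1 (child t j).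
Proof.
move=> td1 tok jlt; have [_ _ _ /allP W_above _] := and5P (saw_step_spanning td1 tok).
exact: W_above (mem_nth t jlt).
Qed.

Lemma label_triple t u : triple_ok t -> is_addr t u ->
  triple_ok (label t u) && leF t.1.1 (label t u).1.1.
Proof.
elim: u t => [|j u IH] t /= tok; first by rewrite tok leF_refl.
case/andP=> jlt ua; have [td1|td1] := boolP (depth_le1 t.1.1).
  by rewrite child_depth_le1 // label_depth_le1 ?tok ?leF_refl.
case/andP: (child_triple_above td1 tok jlt) => cok /andP[tc _].
by case/andP: (IH _ cok ua) => -> /(leF_trans tc).
Qed.

Lemma label_chain t u : triple_ok t -> is_addr t u -> ~~ depth_le1 (label t u).1.1 ->
  exists C : {set F}, [/\ is_chain leF C, #|C| = size u + 3 &
                          forall y, y \in C -> leF t.1.1 y].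
Proof.
elim: u t => [|j u IH] t tok; first by move=> _; apply: not_depth_le1_chain.
case/andP=> jlt ua ld1; have td1 : ~~ depth_le1 t.1.1.
  by apply: contra ld1 => td1; rewrite label_depth_le1.
case/andP: (child_triple_above td1 tok jlt) => cok tc.
have [C [C_chain C_card tC]] := IH _ cok ua ld1.
have tltC y (yC : y \in C) : ltF t.1.1 y := ltF_trans_le leF_anti leF_trans tc (tC y yC).
have [tC_chain tC_card] := chain_setU1 leF_refl C_chain tltC.
exists (t.1.1 |: C); rewrite tC_card C_card; split => // y /setU1P[->|/tltC/andP[]//].
exact: leF_refl.
Qed.

Definition top0 : F := xchoose (tops_nonempty leF_refl leF_anti leF_trans rF).

Lemma top0_tops : top0 \in tops rF.
Proof. exact: xchooseP. Qed.

Lemma top0_depth_le1 : depth_le1 top0.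
Proof. exact/top_depth_le1/(mem_tops_top top0_tops). Qed.

Definition saw_root : S := (rF, top0, top0).

Lemma root_not_depth_le1 : ~~ depth_le1 rF.
Proof.
apply/negP => rd1; have [[C [C_chain C_card]] _] := F_height.
have C_tops : #|C :\ rF| <= 1.
  apply/card_le1_eqP => x y /setD1P[xr xC] /setD1P[yr yC].
  have [/topP xtop /topP ytop] : top x /\ top y.
    by split; apply: depth_le1_succ_top rd1 _; rewrite /ltF rF_root ?xr ?yr.
  by case/orP: (C_chain x y xC yC) => [/xtop|/ytop] ->.
have := cardsD1 rF C; rewrite C_card => C_split.
have : n.+1 <= 2 by rewrite C_split (leq_add (leq_b1 _) C_tops).
by rewrite ltnS leqNgt n_ge2.
Qed.

Lemma saw_root_triple : triple_ok saw_root.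
Proof. by rewrite /triple_ok /= top0_tops (negbTE root_not_depth_le1). Qed.

Lemma saw_root_spanning : spanning_walk leF rF top0 top0 (saw_step saw_root).
Proof. exact: (@saw_step_spanning saw_root root_not_depth_le1 saw_root_triple). Qed.

Local Notation h := n.-1.

Lemma pred_n_gt0 : 0 < h.
Proof. by rewrite -ltnS prednK // ltnW. Qed.

Lemma label_not_depth_le1_size u :
  is_addr saw_root u -> ~~ depth_le1 (label saw_root u).1.1 -> size u < h.
Proof.
move=> ua ld1; have [C [C_chain C_card _]] := label_chain saw_root_triple ua ld1.
have [_ C_max] := F_height; have := C_max C C_chain; rewrite C_card.
by case: n n_ge2 => [|[|m]] //= _; rewrite !addnS addn0 !ltnS.
Qed.

Lemma child_saw_root_first : child saw_root 0 = (top0, top0, top0).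
Proof. by case/and5P: saw_root_spanning => /eqP E _ _ _ _; rewrite /child E. Qed.

Lemma child_saw_root_last :
  child saw_root (size (saw_step saw_root)).-1 = (top0, top0, top0).
Proof.
case/and5P: saw_root_spanning => /eqP E /eqP L _ _ _.
by rewrite /child nth_last E; rewrite E in L.
Qed.

Local Notation tree := (tree saw_step h saw_root).
Local Notation tree_le := (@tree_le _ saw_step h saw_root).
Local Notation tree_root := (tree_root saw_step h saw_root).
Local Notation leaves := (leaves saw_step h saw_root).
Local Notation leaf_enum := (leaf_enum saw_step h saw_root).

Lemma leaf_is_addr k : k < size leaves -> is_addr saw_root (nth [::] leaves k).
Proof. by move=> kl; have := mem_nth [::] kl; rewrite mem_level => /andP[]. Qed.

Lemma first_leaf_label : label saw_root (head [::] leaves) = (top0, top0, top0).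
Proof.
rewrite /leaves -(prednK pred_n_gt0) (head_level saw_step_ne) /= child_saw_root_first.
by rewrite label_depth_le1 //; apply: top0_depth_le1.
Qed.

Lemma last_leaf_label : label saw_root (last [::] leaves) = (top0, top0, top0).
Proof.
rewrite /leaves -(prednK pred_n_gt0) (last_level saw_step_ne) /= child_saw_root_last.
by rewrite label_depth_le1 //; apply: top0_depth_le1.
Qed.

Lemma leaves_size_gt1 : 1 < size leaves.
Proof.
case/and5P: saw_root_spanning => /eqP E _ _ _ /forallP cover.
have [w rw wtop] := not_depth_le1_witness root_not_depth_le1.
have := implyP (cover w) rw; rewrite E inE => /orP[/eqP wE|w_in].
  by move: wtop; rewrite wE (mem_tops_top top0_tops).
rewrite /leaves -(prednK pred_n_gt0); apply: leq_trans (size_step_le_level saw_step_ne _ _).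
by rewrite E /=; case: (behead _) w_in.
Qed.

Lemma leaves_adjacent i : i.+1 < size leaves ->
  (label saw_root (nth [::] leaves i)).2 = (label saw_root (nth [::] leaves i.+1)).1.2.
Proof.
move=> il; case/andP: (links_level saw_step_links h saw_root).
move=> /(pathP saw_root) /(_ i.+1).
by rewrite size_map /= !(nth_map [::]) ?(ltnW il) // => /(_ il) /eqP.
Qed.

Lemma leaf_tops_above (x : tree) k :
  k < size leaves -> prefix (val x) (nth [::] leaves k) ->
  leF (label saw_root (val x)).1.1 (label saw_root (nth [::] leaves k)).1.2 &&
  leF (label saw_root (val x)).1.1 (label saw_root (nth [::] leaves k)).2.
Proof.
move=> kl /prefixP[w E]; have := leaf_is_addr kl; rewrite E is_addr_cat => /andP[xa wa].
rewrite label_cat; have /andP[xok _] := label_triple saw_root_triple xa.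
case/andP: (label_triple xok wa) => /and3P[ta tb _] le_x.
by rewrite (leF_trans le_x (mem_tops_le ta)) (leF_trans le_x (mem_tops_le tb)).
Qed.

(** The saw [i] lies between the leaves [i] and [i + 1], whose labels share
    the top it is mapped to. *)
Definition saw_map (z : tree + 'I_(size leaf_enum).-1) : F :=
  match z with
  | inl x => (label saw_root (val x)).1.1
  | inr i => (label saw_root (nth [::] leaves i)).2
  end.

Lemma saw_index_lt (i : 'I_(size leaf_enum).-1) : i.+1 < size leaves.
Proof.
rewrite -size_leaf_enum -[X in _ < X]prednK ?ltnS //.
by rewrite size_leaf_enum (ltn_trans _ leaves_size_gt1).
Qed.

Lemma saw_map_top i : top (saw_map (inr i)).
Proof.
have il : i < size leaves := ltnW (saw_index_lt i).
case/andP: (label_triple saw_root_triple (leaf_is_addr il)) => /and3P[_ tb _] _.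
exact: mem_tops_top tb.
Qed.

Local Notation sawed_le := (sawed_le tree_le tree_root leaf_enum).

Lemma saw_map_up_saw i :
  saw_map @: ([set: _] :&: up sawed_le (inr i)) = up leF (saw_map (inr i)).
Proof.
rewrite setTI; apply: imset_up => [[y|j]|z /(topP leF _ (saw_map_top i)) ->].
- by rewrite inE.
- by rewrite inE /= => /eqP <-; apply: leF_refl.
- by exists (inr i); rewrite ?inE /=.
Qed.

Lemma saw_map_above (x : tree) y :
  sawed_le (inl x) y -> leF (saw_map (inl x)) (saw_map y).
Proof.
have xa := tree_is_addr x; have /andP[xok _] := label_triple saw_root_triple xa.
case: y => [y /prefixP[w E]|i /= /orP[] xi].
- have := tree_is_addr y; rewrite E is_addr_cat => /andP[_ wa].
  by rewrite /= E label_cat; case/andP: (label_triple xok wa).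
- have il : i < size leaves := ltnW (saw_index_lt i).
  rewrite /tree_le /= nth_leaf_enum // in xi.
  by case/andP: (leaf_tops_above il xi).
- rewrite /tree_le /= nth_leaf_enum ?saw_index_lt // in xi.
  rewrite /= leaves_adjacent ?saw_index_lt //.
  by case/andP: (leaf_tops_above (saw_index_lt i) xi).
Qed.

Lemma saw_map_cover_child (x : tree) z :
  ~~ depth_le1 (saw_map (inl x)) -> ltF (saw_map (inl x)) z ->
  exists2 y, sawed_le (inl x) y & saw_map y = z.
Proof.
rewrite /=; set t := label saw_root (val x) => xd1 xz.
have xa := tree_is_addr x; have /andP[tok _] := label_triple saw_root_triple xa.
case/and5P: (@saw_step_spanning t xd1 tok) => _ _ _ _ /forallP/(_ z)/implyP/(_ xz).
case/mapP=> t' t'W ->; pose j := index t' (saw_step t).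
have xj : val x ++ [:: j] \in nodes saw_step h saw_root.
  rewrite mem_nodes size_cat addn1 (label_not_depth_le1_size xa xd1).
  by rewrite is_addr_cat xa /= index_mem t'W.
exists (inl (insubd tree_root (val x ++ [:: j]))).
  by rewrite /= /tree_le val_insubd_node // prefix_prefix.
by rewrite /= val_insubd_node // label_cat /= /child nth_index.
Qed.

Lemma saw_map_cover_saw (x : tree) z :
  depth_le1 (saw_map (inl x)) -> ltF (saw_map (inl x)) z ->
  exists2 y, sawed_le (inl x) y & saw_map y = z.
Proof.
rewrite /=; set t := label saw_root (val x) => xd1 xz.
have xa := tree_is_addr x; have /andP[tok _] := label_triple saw_root_triple xa.
have /andP[_ zt] := xz; have ztop := depth_le1_succ_top xd1 xz.
case/and3P: tok => _ _ /implyP/(_ xd1)/subsetP/(_ z) zab.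
have {zab} : z \in [set t.1.2; t.2] by apply: zab; rewrite inE ztop; case/andP: xz.
pose u := val x ++ nseq (h - size (val x)) 0.
have ul : u \in leaves.
  rewrite /leaves mem_level size_cat size_nseq subnKC ?tree_size // eqxx /=.
  by rewrite is_addr_cat xa (is_addr_nseq0 saw_step_ne).
have ut : label saw_root u = t by rewrite label_cat label_depth_le1.
pose k := index u leaves; have kl : k < size leaves by rewrite index_mem.
have ku : nth [::] leaves k = u by rewrite nth_index.
have xu : prefix (val x) u by rewrite prefix_prefix.
rewrite !inE => /orP[/eqP za|/eqP zb].
  have [k0|k_gt0] := posnP k.
    have := first_leaf_label; rewrite -nth0 -k0 ku ut => tE.
    by move: zt; rewrite za tE eqxx.
  have kk : k.-1 < (size leaf_enum).-1.
    by rewrite size_leaf_enum -ltnS (prednK k_gt0) (prednK (ltn_trans k_gt0 kl)).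
  exists (inr (Ordinal kk)).
    by rewrite /= /tree_le /= prednK // (nth_leaf_enum _ kl) ku xu orbT.
  by rewrite /= leaves_adjacent prednK // ku ut za.
have [k1|k1] := ltnP k.+1 (size leaves).
  have kk : k < (size leaf_enum).-1.
    by rewrite size_leaf_enum -ltnS prednK // (ltn_trans _ k1).
  exists (inr (Ordinal kk)); first by rewrite /= /tree_le /= nth_leaf_enum // ku xu.
  by rewrite /= ku ut zb.
have := last_leaf_label; rewrite -nth_last.
have -> : (size leaves).-1 = k.
  by apply/eqP; rewrite -eqSS prednK ?eqn_leq ?k1 // (leq_ltn_trans _ kl).
by rewrite ku ut => tE; move: zt; rewrite zb tE eqxx.
Qed.

Lemma saw_map_pmorphism : pmorphism sawed_le leF saw_map.
Proof.
move=> [x|i] _; last exact: saw_map_up_saw.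
rewrite setTI; apply: imset_up => [y|z xz]; first by rewrite inE; apply: saw_map_above.
have [->|zx] := eqVneq z (saw_map (inl x)).
  by exists (inl x); rewrite ?inE /= /tree_le /= ?prefix_refl.
have xz' : ltF (saw_map (inl x)) z by rewrite /ltF xz zx.
have [y xy <-] : exists2 y, sawed_le (inl x) y & saw_map y = z.
  by case: (boolP (depth_le1 (saw_map (inl x)))) => xd1;
    [apply: saw_map_cover_saw | apply: saw_map_cover_child].
by exists y; rewrite ?inE.
Qed.

Lemma saw_map_surj : saw_map @: [set: _] = [set: F].
Proof.
apply/setP => z; rewrite inE; apply/imsetP.
have := saw_map_pmorphism (in_setT (inl tree_root)); rewrite setTI => E.
have : z \in up leF (saw_map (inl tree_root)) by rewrite inE; apply: rF_root.
by rewrite -E => /imsetP[y _ ->]; exists y.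
Qed.

End SawedCover.

Arguments saw_map {F leF} rF n {leF_refl leF_anti leF_trans fork_free scott_free} z.

Theorem lemma7p8 (n : nat) (hn : 2 <= n)
    (F : finType) (leF : rel F) (rF : F) :
  finite_rooted_poset leF rF -> has_height leF n -> validates_PL leF ->
  exists (T : finType) (leT : rel T) (rT : T) (s : seq T),
    [/\ is_tree leT rT,
        (exists m, 0 < m /\ has_height leT m),
        (forall x y, is_top leT x -> is_top leT y ->
           elt_height leT x = elt_height leT y) /\
        plane_enum leT s,
        has_height (sawed_le leT rT s) n &
        (exists f : T + 'I_(size s).-1 -> F,
          pmorphism (sawed_le leT rT s) leF f /\ f @: [set: _] = [set: F])].
Proof.
move=> [[le_refl [le_anti le_trans]] rF_root] F_height [fork_free scott_free].
pose step := saw_step le_refl le_anti le_trans fork_free scott_free.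
have step_ne : forall t, step t != [::] := saw_step_ne _ _ _ _ _.
pose root := saw_root rF le_refl le_anti le_trans.
have leaves2 :=
  leaves_size_gt1 hn le_refl le_anti le_trans rF_root F_height fork_free scott_free.
exists (tree step n.-1 root), tree_le, (tree_root step n.-1 root).
exists (leaf_enum step n.-1 root).
split.
- exact: tree_le_tree.
- by exists n.-1; split; [exact: pred_n_gt0 | exact: tree_height].
- split; last exact: leaf_enum_plane.
  move=> x y; rewrite !(is_top_tree step_ne) /elt_height !card_down_tree.
  by move=> /eqP-> /eqP->.
- by rewrite -[X in has_height _ X](prednK (ltnW hn)); apply: sawed_tree_height.
- exists (saw_map rF n).
  by split; [exact: saw_map_pmorphism | exact: saw_map_surj].
Qed.
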